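(* Let $x\in\Sigma$, $\ell\ge1$, $n\ge2$ and $\varepsilon=2^{-h}$ with $h\in\mathbb N$; put $\varepsilon_0=1/2$ and $\theta_{nh}=\frac{(n+h-1)^2-(n+h-1)}{n^2-n}$. Then \begin{align*} N_\ell(x,n,\varepsilon)&=N_{\ell+h-1}(x,n+h-1,\varepsilon_0),\\ \lambda_\ell(x,n,\varepsilon)&=\theta_{nh}\,\lambda_{\ell+h-1}(x,n+h-1,\varepsilon_0),\\ \Lambda_\ell(x,n,\varepsilon)&=\theta_{nh}\,\Lambda_{\ell+h-1}(x,n+h-1,\varepsilon_0),\\ \mathrm{RR}_\ell(x,n,\varepsilon)&=\theta_{nh}\big(\mathrm{RR}_{\ell+h-1}(x,n+h-1,\varepsilon_0)-(h-1)\Lambda_{\ell+h-1}(x,n+h-1,\varepsilon_0)\big). \end{align*}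
   Context: $A=\{0,1\}$, $\Sigma=A^{\mathbb N_0}$ with metric $\rho(y,z)=2^{-\min\{i\ge0:\,y_i\ne z_i\}}$ for $y\ne z$, shift $\sigma$. Recurrence plot $R(x,n,\varepsilon)$: $n\times n$ matrix ($0\le i,j<n$) with entry $1$ iff $\rho(\sigma^ix,\sigma^jx)\le\varepsilon$. A line of length $\ell$: $(i,j,\ell)$ with $0\le i,j\le n-\ell$, $i\ne j$, entries $(i+k,j+k)=1$ for $0\le k<\ell$, entry $(i-1,j-1)=0$ if $\min\{i,j\}>0$, entry $(i+\ell,j+\ell)=0$ if $\max\{i,j\}<n-\ell$. $N_\ell(x,n,\varepsilon)$ = number of lines of length exactly $\ell$ (boundary ones included), $\lambda_\ell=N_\ell/(n^2-n)$, $\Lambda_\ell=\sum_{l\ge\ell}\lambda_l$, $\mathrm{RR}_\ell=\sum_{l\ge\ell}l\lambda_l$. *)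

From HB Require Import structures.
From mathcomp Require Import all_boot all_order all_algebra.
From mathcomp Require Import boolp reals.
Set Implicit Arguments. Unset Strict Implicit. Unset Printing Implicit Defensive.
Import Order.TTheory GRing.Theory Num.Theory.
Local Open Scope ring_scope.

Section RecPlot.
Variable R : realType.

Definition shift (i : nat) (x : nat -> bool) : nat -> bool := fun k => x (i + k)%N.

Definition rho (y z : nat -> bool) : R :=
  match pselect (exists i, y i != z i) with
  | left H => (2%:R ^+ (@ex_minn (fun i => y i != z i) H))^-1
  | right _ => 0
  end.

Definition rec (x : nat -> bool) (eps : R) (i j : nat) : bool :=
  rho (shift i x) (shift j x) <= eps.

Definition isline (x : nat -> bool) (n : nat) (eps : R) (l i j : nat) : bool :=
  [&& (i + l <= n)%N, (j + l <= n)%N, i != j,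
      [forall k : 'I_l, rec x eps (i + k)%N (j + k)%N],
      (0 < minn i j)%N ==> ~~ rec x eps i.-1 j.-1 &
      (maxn i j < n - l)%N ==> ~~ rec x eps (i + l)%N (j + l)%N].

Definition Nlines (x : nat -> bool) (n : nat) (eps : R) (l : nat) : nat :=
  #|[set p : 'I_n.+1 * 'I_n.+1 | isline x n eps l p.1 p.2]|.

Definition lambda (x : nat -> bool) (n : nat) (eps : R) (l : nat) : R :=
  (Nlines x n eps l)%:R / ((n%:R) ^+ 2 - n%:R).

(* Lambda_l = sum_{l' >= l} lambda_l'; lambda_l' = 0 for l' > n, so the sum
   is the finite sum over l <= l' <= n *)
Definition Lambda (x : nat -> bool) (n : nat) (eps : R) (l : nat) : R :=
  \sum_(l <= l' < n.+1) lambda x n eps l'.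

Definition RR (x : nat -> bool) (n : nat) (eps : R) (l : nat) : R :=
  \sum_(l <= l' < n.+1) l'%:R * lambda x n eps l'.

End RecPlot.

(* With eps = 2^-h, entry (a,b) of the recurrence plot is 1 exactly when x and
   its shifts agree on the window of h symbols starting at a and b, while with
   eps0 = 1/2 only the first symbol is compared.  Hence a diagonal run of l
   ones at level eps is the same as a run of l + h - 1 ones at level eps0
   starting at the same place, and the boundary zeros correspond as well.
   Lines of R(x,n,eps) and of R(x,n+h-1,eps0) are thus in bijection, which
   gives the identity for N_l; the others follow by rescaling by theta and
   reindexing the sums over line lengths. *)
From HB Require Import structures.
From mathcomp Require Import all_boot all_order all_algebra.
From mathcomp Require Import boolp reals.
From mathcomp Require Import ring zify.
Import Order.TTheory GRing.Theory Num.Theory.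
Local Open Scope ring_scope.

Lemma forall_ordP (n : nat) (P : nat -> bool) :
  reflect (forall k, (k < n)%N -> P k) [forall k : 'I_n, P k].
Proof.
apply: (iffP forallP) => [H k lt_kn | H k]; last exact: H.
exact: (H (Ordinal lt_kn)).
Qed.

Lemma windows_cover (P : nat -> Prop) (l h : nat) : (0 < l)%N ->
  (forall k, (k < l)%N -> forall t, (t <= h)%N -> P (k + t)%N) <->
  (forall k, (k < l + h)%N -> P k).
Proof.
move=> l_gt0; split=> [H k lt_k | H k lt_kl t le_th]; last by apply: H; lia.
case: (ltnP k l) => [lt_kl | le_lk]; first by rewrite -[k]addn0; apply: H.
have -> : k = (l.-1 + (k - l.-1))%N by lia.
by apply: H; lia.
Qed.

Section RecurrencePlotRescaling.
Variables (R : realType) (x : nat -> bool).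

Lemma recP (h a b : nat) :
  reflect (forall t, (t < h)%N -> x (a + t)%N = x (b + t)%N)
          (rec x ((2%:R ^+ h)^-1 : R) a b).
Proof.
rewrite /rec /rho; case: pselect => [diff | same]; last first.
  rewrite invr_ge0 exprn_ge0 ?ler0n //; apply: ReflectT => t _.
  by apply/eqP/negPn/negP => neq; apply: same; exists t.
case: ex_minnP => k neq_k min_k.
rewrite lef_pV2 ?posrE ?exprn_gt0 ?ltr0n // ler_eXn2l ?ltr1n //.
apply: (iffP idP) => [le_hk t lt_th | agree].
  by apply/eqP/negPn/negP => /min_k; lia.
by rewrite leqNgt; apply/negP => /agree; apply/eqP.
Qed.

Lemma rec_halfE (a b : nat) : rec x (2%:R^-1 : R) a b = (x a == x b).
Proof.
rewrite -[X in X^-1]expr1; apply/recP/eqP => [agree | eq_ab [|//] _].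
  by have := agree 0%N isT; rewrite !addn0.
by rewrite !addn0.
Qed.

Lemma rec_pow2S_single (h s a b : nat) : (s <= h)%N ->
  (forall t, (t <= h)%N -> t != s -> x (a + t)%N = x (b + t)%N) ->
  rec x ((2%:R ^+ h.+1)^-1 : R) a b = (x (a + s)%N == x (b + s)%N).
Proof.
move=> le_sh agree; apply/recP/eqP => [all_agree | eq_s t lt_th]; first exact: all_agree.
by have [-> // | ne_ts] := eqVneq t s; apply: agree.
Qed.

Lemma rec_run_pow2S (h l i j : nat) : (0 < l)%N ->
  [forall k : 'I_l, rec x ((2%:R ^+ h.+1)^-1 : R) (i + k) (j + k)] =
  [forall k : 'I_(l + h), rec x (2%:R^-1 : R) (i + k) (j + k)].
Proof.
move=> l_gt0.
have cover_run := windows_cover (fun k => x (i + k)%N = x (j + k)%N) l h l_gt0.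
apply/(forall_ordP _ (fun k => rec x _ (i + k) (j + k)))/
      (forall_ordP _ (fun k => rec x _ (i + k) (j + k))).
  move=> run_l k lt_k; rewrite rec_halfE; apply/eqP; move: k lt_k.
  apply: cover_run.1 => k /run_l /recP agree t le_th.
  by rewrite !addnA; apply: agree.
move=> run_lh.
have /cover_run.2 window k : (k < l + h)%N -> x (i + k)%N = x (j + k)%N.
  by move=> /run_lh; rewrite rec_halfE => /eqP.
by move=> k lt_kl; apply/recP => t lt_th; rewrite -!addnA; apply: window.
Qed.

Lemma isline_pow2S (n l h i j : nat) : (0 < l)%N ->
  isline x n ((2%:R ^+ h.+1)^-1 : R) l i j =
  isline x (n + h) (2%:R^-1 : R) (l + h) i j.
Proof.
move=> l_gt0; rewrite /isline rec_run_pow2S // subnDr !addnA !leq_add2r.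
case: (boolP [forall k : 'I_(l + h), _]); last by rewrite !andbF.
move=> /(forall_ordP _ (fun k => rec x _ (i + k) (j + k))) run.
have {run} agree k : (k < l + h)%N -> x (i + k)%N = x (j + k)%N.
  by move=> /run; rewrite rec_halfE => /eqP.
have -> : rec x ((2%:R ^+ h.+1)^-1 : R) (i + l) (j + l) =
          rec x (2%:R^-1 : R) (i + l + h) (j + l + h).
  rewrite rec_halfE (@rec_pow2S_single h h) ?addnA // => t le_th ne_th.
  by rewrite -!addnA; apply: agree; lia.
case: i agree => [|i] agree; first by rewrite min0n.
case: j agree => [|j] agree; first by rewrite minn0.
rewrite (@rec_pow2S_single h 0) ?rec_halfE ?addn0 // => -[//|t] le_th _.
by rewrite /= -!addSnnS; apply: agree; lia.
Qed.

Lemma card_pairs_widen (N M : nat) (P : nat -> nat -> bool) : (N <= M)%N ->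
  (forall i j, P i j -> (i < N)%N /\ (j < N)%N) ->
  #|[set p : 'I_N * 'I_N | P p.1 p.2]| = #|[set p : 'I_M * 'I_M | P p.1 p.2]|.
Proof.
move=> le_NM P_bounded.
pose f (p : 'I_N * 'I_N) := (widen_ord le_NM p.1, widen_ord le_NM p.2).
have inj_f : injective f by move=> [a b] [c d] [/val_inj-> /val_inj->].
rewrite -(card_imset _ inj_f); apply: eq_card => -[a b].
rewrite inE /=; apply/imsetP/idP => [[[c d]] | Pab].
  by rewrite inE => Pcd [-> ->].
have [lt_a lt_b] := P_bounded _ _ Pab.
by exists (Ordinal lt_a, Ordinal lt_b); rewrite ?inE //; congr pair; apply: val_inj.
Qed.

Lemma Nlines_pow2S (n l h : nat) : (0 < l)%N ->
  Nlines x n ((2%:R ^+ h.+1)^-1 : R) l = Nlines x (n + h) (2%:R^-1 : R) (l + h).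
Proof.
move=> l_gt0; rewrite /Nlines.
under eq_finset => p do rewrite isline_pow2S //.
apply: card_pairs_widen; first lia.
by move=> a b; rewrite -isline_pow2S // /isline => /and3P[le_a le_b _]; lia.
Qed.

End RecurrencePlotRescaling.

Lemma natr_sqr_subr_gt0 {R : numDomainType} {k : nat} : (2 <= k)%N ->
  (0 : R) < k%:R ^+ 2 - k%:R.
Proof.
move=> le_2k; rewrite expr2 -{3}(mulr1 k%:R) -mulrBr mulr_gt0 ?subr_gt0 ?ltr1n //.
by rewrite ltr0n; lia.
Qed.

Theorem mainTheorem11 (R : realType) (x : nat -> bool) (l n h : nat) :
  (1 <= l)%N -> (2 <= n)%N -> (1 <= h)%N ->
  let eps : R := (2%:R ^+ h)^-1 in
  let eps0 : R := 2%:R^-1 in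
  let m := (n + h - 1)%N in
  let theta : R := ((m%:R) ^+ 2 - m%:R) / ((n%:R) ^+ 2 - n%:R) in
  [/\ Nlines x n eps l = Nlines x m eps0 (l + h - 1),
      lambda x n eps l = theta * lambda x m eps0 (l + h - 1),
      Lambda x n eps l = theta * Lambda x m eps0 (l + h - 1) &
      RR x n eps l = theta * (RR x m eps0 (l + h - 1)
                              - (h - 1)%:R * Lambda x m eps0 (l + h - 1))].
Proof.
case: h => [//|h] l_gt0 n_ge2 _; rewrite !addnS !subn1 /=.
set theta : R := _ / _.
have lambdaE k : (0 < k)%N ->
    lambda x n ((2%:R ^+ h.+1)^-1) k = theta * lambda x (n + h) (2%:R^-1) (k + h).
  move=> k_gt0; rewrite /lambda /theta Nlines_pow2S //; field.
  by rewrite -natrD !lt0r_neq0 // natr_sqr_subr_gt0 //; lia.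
have shift_range : ((n + h).+1 - h = n.+1)%N by lia.
have sumE (F : nat -> R) : \sum_(l + h <= k < (n + h).+1) F k =
                           \sum_(l <= k < n.+1) F (k + h)%N.
  by rewrite big_addn shift_range.
split.
- exact: Nlines_pow2S.
- exact: lambdaE.
- rewrite /Lambda sumE mulr_sumr; apply: eq_big_nat => k /andP[le_lk _].
  by apply: lambdaE; lia.
- rewrite /RR /Lambda !sumE !mulr_sumr -sumrB mulr_sumr.
  apply: eq_big_nat => k /andP[le_lk _]; rewrite lambdaE; last lia.
  by rewrite natrD; ring.
Qed.
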